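(* Let $\lambda>1$, suppose $(P_1)$ is feasible, and let $y^*$ be an optimal solution to $\max_{y\in\mathbb{R}^{\mathcal{S}}_{\ge0}}g_\lambda(y)$. Then $\sum_{S\in\mathcal{S}}b_Sy^*_S\le\frac{\mathrm{OPT}(1)-\mathrm{OPT}(\lambda)}{\lambda-1}$.
   Context: Setting: $G=(V,E)$ undirected connected graph, costs $c_e\ge0$, a chain $\mathcal{S}$ of node sets $S_1\subsetneq\dots\subsetneq S_\ell\subsetneq V$, integers $b_S$. $E(S)$ = edges with both ends in $S$, $\delta(S)$ = edges with exactly one end in $S$, $z(F)=\sum_{e\in F}z_e$. $P_{ST}(G)=\{x\in\mathbb{R}^E_{\ge0}: x(E(S))\le|S|-1\ \forall\emptyset\ne S\subsetneq V,\ x(E)=|V|-1\}$. For $\lambda\ge1$, $(P_\lambda)$: minimize $\sum_ec_ex_e$ over $x\in P_{ST}(G)$ with $x(\delta(S))\le\lambda b_S$ for all $S\in\mathcal{S}$; $\mathrm{OPT}(\lambda)$ is its optimal value. $g_\lambda(y)=\min_{x\in P_{ST}(G)}\big(\sum_ec_ex_e+\sum_{S\in\mathcal{S}}(x(\delta(S))-\lambda b_S)y_S\big)$ for $y\in\mathbb{R}^{\mathcal{S}}_{\ge0}$. *)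

From HB Require Import structures.
From mathcomp Require Import classical_sets reals.
From mathcomp Require Import all_boot all_order all_algebra.
Set Implicit Arguments. Unset Strict Implicit. Unset Printing Implicit Defensive.
Import Order.TTheory GRing.Theory Num.Theory.
Local Open Scope ring_scope.

(* Simple undirected graph on a finite vertex type V given by a symmetric,
   irreflexive adjacency relation; edges are the 2-element vertex sets {u,v}. *)
Section Defs.
Variables (R : realType) (V : finType) (adj : rel V).

Definition Eset : {set {set V}} :=
  [set A : {set V} | [exists u, exists v, adj u v && (A == [set u; v])]].

Definition Ein (S : {set V}) : {set {set V}} := [set A in Eset | A \subset S].
Definition delta (S : {set V}) : {set {set V}} :=
  [set A in Eset | #|A :&: S| == 1%N].

Definition xsum (x : {set V} -> R) (F : {set {set V}}) : R := \sum_(A in F) x A.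

Definition in_PST (x : {set V} -> R) : Prop :=
  [/\ forall A, A \in Eset -> 0 <= x A,
      forall S : {set V}, S != set0 -> S \proper [set: V] ->
        xsum x (Ein S) <= (#|S|%:R - 1)
    & xsum x Eset = #|V|%:R - 1].

Definition cost (c : {set V} -> R) (x : {set V} -> R) : R :=
  \sum_(A in Eset) c A * x A.

Variables (l : nat) (S : 'I_l -> {set V}) (b : 'I_l -> int) (c : {set V} -> R).

Definition feasible (lam : R) (x : {set V} -> R) : Prop :=
  in_PST x /\ forall i : 'I_l, xsum x (delta (S i)) <= lam * (b i)%:~R.

Definition OPT (lam : R) : R := inf [set cost c x | x in [set x | feasible lam x]]%classic.

Definition glag (lam : R) (y : 'I_l -> R) : R :=
  inf [set cost c x + \sum_(i < l) (xsum x (delta (S i)) - lam * (b i)%:~R) * y i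
      | x in [set x | in_PST x]]%classic.

End Defs.

From mathcomp Require Import classical_sets reals.
From mathcomp Require Import all_boot all_order all_algebra lra ring.
Set Implicit Arguments.
Unset Strict Implicit.
Unset Printing Implicit Defensive.
Import Order.TTheory GRing.Theory Num.Theory.
Local Open Scope ring_scope.

(* Strong Lagrangian duality for linear programs: if ystar maximises g_lambda then
   OPT(lambda) <= g_lambda(ystar), which we derive from a Farkas-type alternative
   for affine inequalities proved by Fourier-Motzkin elimination.  For any x
   feasible for (P_1), plugging x into g_lambda(ystar) gives
   g_lambda(ystar) <= c x + sum_S (x(delta S) - lambda b_S) ystar_S
               <= c x - (lambda - 1) sum_S b_S ystar_S,
   and taking the infimum over x yields
   OPT(lambda) + (lambda - 1) sum_S b_S ystar_S <= OPT(1).  Nothing about spanning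
   trees, chains or connectivity is used: the argument works for any LP whose
   objective is bounded below on its feasible region. *)

Section AffineForms.
Variables (R : realFieldType) (T : finType).

(* (coefficients, constant term) *)
Definition aform := ((T -> R) * R)%type.

Definition aeval (D : {set T}) (f : aform) (x : T -> R) : R :=
  \sum_(t in D) f.1 t * x t + f.2.

Definition aform0 : aform := (fun _ => 0, 0).
Definition aformD (f g : aform) : aform := (fun t => f.1 t + g.1 t, f.2 + g.2).
Definition aformZ (a : R) (f : aform) : aform := (fun t => a * f.1 t, a * f.2).

Inductive acone (I : Type) (L : I -> aform) : aform -> Prop :=
| acone_gen i : acone L (L i)
| acone0 : acone L aform0
| aconeD f g : acone L f -> acone L g -> acone L (aformD f g)
| aconeZ a f : 0 <= a -> acone L f -> acone L (aformZ a f).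

Lemma acone_trans (I J : Type) (L : I -> aform) (L' : J -> aform) g :
  (forall j, acone L (L' j)) -> acone L' g -> acone L g.
Proof. by move=> HL'; elim=> *; [apply: HL' | constructor..]. Qed.

Lemma acone_coord0 (I : Type) (L : I -> aform) t g :
  (forall i, (L i).1 t = 0) -> acone L g -> g.1 t = 0.
Proof.
move=> HL; elim=> [i||f h _ IHf _ IHh|a f _ _ IHf] //=.
- by rewrite IHf IHh addr0.
- by rewrite IHf mulr0.
Qed.

Variable D : {set T}.

Lemma aeval0 x : aeval D aform0 x = 0.
Proof. by rewrite /aeval big1 ?addr0 // => t _; rewrite mul0r. Qed.

Lemma aevalD f g x : aeval D (aformD f g) x = aeval D f x + aeval D g x.
Proof.
by rewrite /aeval /=; under eq_bigr do rewrite mulrDl; rewrite big_split addrACA.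
Qed.

Lemma aevalZ a f x : aeval D (aformZ a f) x = a * aeval D f x.
Proof. by rewrite /aeval mulrDr mulr_sumr; under eq_bigr do rewrite /= -mulrA. Qed.

Lemma aeval_const f x : {in D, forall t, f.1 t = 0} -> aeval D f x = f.2.
Proof. by move=> f0; rewrite /aeval big1 ?add0r // => t /f0 ->; rewrite mul0r. Qed.

Definition aform_sum (F : {set T}) (a : R) : aform := (fun t => (t \in F)%:R, a).

Lemma aeval_sum F a x : aeval D (aform_sum F a) x = \sum_(t in D :&: F) x t + a.
Proof.
rewrite /aeval (big_setID F) /= [X in _ + X + _]big1 ?addr0 => [|t].
  by congr (_ + _); apply: eq_bigr => t /setIP[_ ->]; rewrite mul1r.
by rewrite inE => /andP[/negbTE -> _]; rewrite mul0r.
Qed.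

Lemma aeval_update t0 f x v : t0 \in D ->
  aeval D f (fun t => if t == t0 then v else x t) = aeval (D :\ t0) f x + f.1 t0 * v.
Proof.
move=> Dt0; rewrite /aeval (bigD1 t0) //= eqxx.
have -> : \sum_(t in D | t != t0) f.1 t * (if t == t0 then v else x t) =
          \sum_(t in D :\ t0) f.1 t * x t.
  by apply: eq_big => [t|t /andP[_ /negbTE ->]] //; rewrite in_setD1 andbC.
ring.
Qed.

End AffineForms.

Arguments aform0 {R T}.

Lemma exists_between (R : realDomainType) (ls us : seq R) :
  {in ls & us, forall a b, a <= b} ->
  exists v, {in ls, forall a, a <= v} /\ {in us, forall b, v <= b}.
Proof.
elim: ls => [|a ls IH] lsus.
  elim: us {lsus} => [|b us [v [_ vus]]]; first by exists 0.
  exists (Num.min b v); split=> // u; rewrite inE => /predU1P[->|/vus uv].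
    by rewrite ge_min lexx.
  by rewrite ge_min uv orbT.
have [v [lsv vus]] : exists v, {in ls, forall a, a <= v} /\ {in us, forall b, v <= b}.
  by apply: IH => a' b ls_a' us_b; apply: lsus; rewrite ?inE ?ls_a' ?orbT.
exists (Num.max a v); split=> [u|u us_u].
  rewrite inE => /predU1P[->|/lsv uv]; first by rewrite le_max lexx.
  by rewrite le_max uv orbT.
by rewrite ge_max vus // andbT lsus // mem_head.
Qed.

Section FourierMotzkin.
Variables (R : realFieldType) (T : finType).

(* One Fourier-Motzkin step: forms with coefficient 0 at t0 are kept, and every
   pair with coefficients of opposite signs is combined so as to cancel it. *)
Definition fm_elim (I : Type) (L : I -> aform R T) (t0 : T) (k : I + I * I) :=
  match k with
  | inl i => if (L i).1 t0 == 0 then L i else aform0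
  | inr (p, q) =>
      if (0 < (L p).1 t0) && ((L q).1 t0 < 0)
      then aformD (aformZ (- (L q).1 t0) (L p)) (aformZ ((L p).1 t0) (L q))
      else aform0
  end.

Lemma fm_elim_coord0 I (L : I -> aform R T) t0 k : (fm_elim L t0 k).1 t0 = 0.
Proof.
case: k => [i|[p q]] /=; first by case: ifP => [/eqP|].
case: ifP => //= _.
by rewrite mulNr mulrC addNr.
Qed.

Lemma acone_fm_elim I (L : I -> aform R T) t0 k : acone L (fm_elim L t0 k).
Proof.
case: k => [i|[p q]] /=; first by case: ifP; constructor.
case: ifP => [/andP[ap aq]|_]; last exact: acone0.
by apply: aconeD; apply: aconeZ; rewrite ?oppr_ge0 ?ltW //; apply: acone_gen.
Qed.

Lemma fm_elim_lift (I : finType) (L : I -> aform R T) (D : {set T}) t0 x :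
  t0 \in D ->
  (forall k, aeval (D :\ t0) (fm_elim L t0 k) x <= 0) ->
  exists v, forall i, aeval D (L i) (fun t => if t == t0 then v else x t) <= 0.
Proof.
move=> Dt0 elim_le0.
pose a i := (L i).1 t0; pose r i := aeval (D :\ t0) (L i) x.
pose bound i := - r i / a i.
have [v [lo hi]] : exists v,
    {in [seq bound i | i <- enum I & a i < 0], forall u, u <= v} /\
    {in [seq bound i | i <- enum I & 0 < a i], forall u, v <= u}.
  apply: exists_between => _ _ /mapP[q + ->] /mapP[p + ->].
  rewrite !mem_filter => /andP[aq _] /andP[ap _].
  have := elim_le0 (inr (p, q)); rewrite /= ap aq aevalD !aevalZ -/(r p) -/(r q).
  by rewrite /bound ler_ndivrMr // mulrAC ler_pdivrMr // !mulNr -/(a p) -/(a q); nra.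
exists v => i; rewrite aeval_update // -/(r i) -/(a i).
have mem_bound (pr : pred I) : pr i -> bound i \in [seq bound j | j <- enum I & pr j].
  by move=> pri; apply: map_f; rewrite mem_filter pri mem_enum.
case: (ltgtP (a i) 0) => [an|ap|a0].
- by have := lo _ (mem_bound (fun j => a j < 0) an); rewrite ler_ndivrMr //; lra.
- by have := hi _ (mem_bound (fun j => 0 < a j) ap); rewrite ler_pdivlMr //; lra.
- have := elim_le0 (inl i); rewrite /= -/(a i) a0 eqxx -/(r i).
  by rewrite mul0r addr0.
Qed.

Theorem affine_transposition (I : finType) (L : I -> aform R T) (D : {set T}) :
  ~ (exists x, forall i, aeval D (L i) x <= 0) ->
  exists2 g, acone L g & 0 < g.2 /\ {in D, forall t, g.1 t = 0}.
Proof.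
move cardD: #|D| => n; elim: n D cardD I L => [|n IH] D cardD I L infeasible.
  have D0 : D = set0 by apply/eqP; rewrite -cards_eq0 cardD.
  case: (pickP (fun i => 0 < (L i).2)) => [i Li_gt0|L_le0].
    by exists (L i); [apply: acone_gen | split=> // t; rewrite D0 inE].
  case: infeasible; exists (fun _ => 0) => i.
  by rewrite aeval_const ?D0 ?leNgt ?L_le0 // => t; rewrite inE.
have [t0 Dt0] : exists t0, t0 \in D by apply/card_gt0P; rewrite cardD.
have cardD' : #|D :\ t0| = n by move: cardD; rewrite (cardsD1 t0) Dt0 add1n => -[].
have infeasible' : ~ exists x, forall k, aeval (D :\ t0) (fm_elim L t0 k) x <= 0.
  move=> [x /(fm_elim_lift Dt0) [v Lv_le0]]; apply: infeasible.
  by exists (fun t => if t == t0 then v else x t).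
have [g g_cone [g2_gt0 g1_0]] := IH _ cardD' _ _ infeasible'.
exists g; first exact: acone_trans (acone_fm_elim L t0) g_cone.
split=> // t Dt; have [->|ne] := eqVneq t t0.
  exact: acone_coord0 (fm_elim_coord0 L t0) g_cone.
by apply: g1_0; rewrite in_setD1 ne.
Qed.

End FourierMotzkin.

Section LagrangeDuality.
Variables (R : realFieldType) (T : finType) (D : {set T}).
Variables (J K : finType) (P : J -> aform R T) (h : K -> aform R T) (f : aform R T).

Definition in_polyhedron x := forall j, aeval D (P j) x <= 0.

Definition lagrange_dominated (z : R) (g : aform R T) :=
  exists mu (y : K -> R), [/\ 0 <= mu, forall k, 0 <= y k &
    forall x, in_polyhedron x ->
      aeval D g x <= mu * (aeval D f x - z) + \sum_k aeval D (h k) x * y k].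

Definition lp_system (z : R) (k : J + K + unit) : aform R T :=
  match k with
  | inl (inl j) => P j
  | inl (inr k) => h k
  | inr _ => (f.1, f.2 - z)
  end.

Lemma lagrange_dominated_nonpos z g :
  (forall x, in_polyhedron x -> aeval D g x <= 0) -> lagrange_dominated z g.
Proof.
move=> g_le0; exists 0, (fun _ => 0); split=> // x Px.
by rewrite mul0r add0r big1 ?g_le0 // => k _; rewrite mulr0.
Qed.

Lemma lagrange_dominated_acone z g : acone (lp_system z) g -> lagrange_dominated z g.
Proof.
elim=> [[[j|k]|[]]||
        g1 g2 _ [m1 [y1 [m1_ge0 y1_ge0 dom1]]] _ [m2 [y2 [m2_ge0 y2_ge0 dom2]]]|
        a g0 a_ge0 _ [m [y [m_ge0 y_ge0 dom]]]].
- by apply: lagrange_dominated_nonpos => x; apply.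
- exists 0, (fun k' => (k' == k)%:R); split=> // x _.
  by rewrite mul0r add0r (bigD1 k) //= eqxx mulr1 big1 ?addr0 // => k' /negbTE->; rewrite mulr0.
- exists 1, (fun _ => 0); split=> // x _.
  by rewrite big1 ?addr0 ?mul1r /aeval ?addrA // => k _; rewrite mulr0.
- by apply: lagrange_dominated_nonpos => x _; rewrite aeval0.
- exists (m1 + m2), (fun k => y1 k + y2 k); split=> [|k|x Px]; rewrite ?addr_ge0 //.
  rewrite aevalD; under eq_bigr do rewrite mulrDr; rewrite big_split /=.
  by have := dom1 x Px; have := dom2 x Px; lra.
- exists (a * m), (fun k => a * y k); split=> [|k|x Px]; rewrite ?mulr_ge0 //.
  under eq_bigr do rewrite mulrCA; rewrite -mulr_sumr -mulrA -mulrDr aevalZ.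
  by rewrite ler_wpM2l // dom.
Qed.

Theorem lagrange_duality z x0 : in_polyhedron x0 -> (forall k, aeval D (h k) x0 <= 0) ->
  (forall x, in_polyhedron x -> (forall k, aeval D (h k) x <= 0) -> z < aeval D f x) ->
  exists2 y : K -> R, forall k, 0 <= y k &
    forall x, in_polyhedron x -> z < aeval D f x + \sum_k aeval D (h k) x * y k.
Proof.
move=> Px0 hx0 z_lt.
have infeasible : ~ exists x, forall k, aeval D (lp_system z k) x <= 0.
  move=> [x Lx_le0]; have := Lx_le0 (inr tt); rewrite /aeval /= addrA subr_le0 leNgt.
  by rewrite z_lt // => [j|k]; [apply: (Lx_le0 (inl (inl j))) | apply: (Lx_le0 (inl (inr k)))].
have [g g_cone [g2_gt0 g1_0]] := affine_transposition infeasible.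
have [mu [y [mu_ge0 y_ge0 dom]]] := lagrange_dominated_acone g_cone.
have {}dom x : in_polyhedron x ->
    g.2 <= mu * (aeval D f x - z) + \sum_k aeval D (h k) x * y k.
  by rewrite -(aeval_const x g1_0); apply: dom.
have sum_le0 : \sum_k aeval D (h k) x0 * y k <= 0.
  by rewrite -oppr_ge0 -sumrN; apply: sumr_ge0 => k _; rewrite -mulNr mulr_ge0 ?oppr_ge0.
(* At the feasible point x0 only the objective generator can make g.2 > 0. *)
have mu_gt0 : 0 < mu.
  rewrite lt_def mu_ge0 andbT; apply: contraTneq g2_gt0 => mu0.
  by rewrite -leNgt (le_trans (dom x0 Px0)) // mu0 mul0r add0r.
exists (fun k => y k / mu) => [k|x Px]; first by rewrite divr_ge0 // ltW.
rewrite -(ltr_pM2l mu_gt0) mulrDr; under eq_bigr do rewrite mulrA; rewrite -mulr_suml.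
rewrite mulrCA divff ?gt_eqF // mulr1.
by have := dom x Px; lra.
Qed.

End LagrangeDuality.

Section SpanningTreeLP.
Variables (R : realType) (V : finType) (adj : rel V).
Variables (l : nat) (S : 'I_l -> {set V}) (b : 'I_l -> int) (c : {set V} -> R).
Implicit Types (x : {set V} -> R) (y : 'I_l -> R) (lam z : R).

Lemma Ein_subset U : Ein adj U \subset Eset adj.
Proof. by apply/subsetP => A; rewrite inE => /andP[]. Qed.

Lemma delta_subset U : delta adj U \subset Eset adj.
Proof. by apply/subsetP => A; rewrite inE => /andP[]. Qed.

Lemma xsum_ge0 (x : {set V} -> R) (F : {set {set V}}) :
  in_PST adj x -> F \subset Eset adj -> 0 <= xsum x F.
Proof. by move=> [x_ge0 _ _] /subsetP sFE; apply: sumr_ge0 => A /sFE /x_ge0. Qed.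

(* P_ST(G) as a polyhedron over the coordinates Eset: nonnegativity, the subtour
   constraints (trivial for the excluded sets U) and the equality x(E) = |V| - 1
   as two inequalities. *)
Definition pst_form (j : {set V} + {set V} + bool) : aform R {set V} :=
  match j with
  | inl (inl A) => aformZ (-1) (aform_sum [set A] 0)
  | inl (inr U) =>
      if (U != set0) && (U \proper [set: V])
      then aform_sum (Ein adj U) (1 - #|U|%:R) else aform0
  | inr up => aformZ (if up then 1 else -1) (aform_sum [set: {set V}] (1 - #|V|%:R))
  end.

Lemma in_PST_polyhedron x : in_PST adj x <-> in_polyhedron (Eset adj) pst_form x.
Proof.
split=> [[x_ge0 x_Ein x_E] [[A|U]|up] /=|Px].
- rewrite aevalZ aeval_sum addr0 mulN1r oppr_le0.
  by apply: sumr_ge0 => t /setIP[/x_ge0].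
- case: ifP => [/andP[U0 U_proper]|_]; last by rewrite aeval0.
  rewrite aeval_sum (setIidPr (Ein_subset U)); have := x_Ein U U0 U_proper.
  by rewrite /xsum; lra.
- rewrite aevalZ aeval_sum setIT -/(xsum x _) x_E; case: up; lra.
split=> [A EA|U U0 U_proper|].
- have := Px (inl (inl A)); rewrite aevalZ aeval_sum addr0 mulN1r oppr_le0.
  by rewrite (setIidPr _) ?sub1set // big_set1.
- have := Px (inl (inr U)); rewrite /= U0 U_proper aeval_sum (setIidPr (Ein_subset U)).
  by rewrite /xsum; lra.
- have := Px (inr true); have := Px (inr false); rewrite /= !aevalZ !aeval_sum setIT.
  by rewrite /xsum; lra.
Qed.

Definition deg_form (lam : R) (i : 'I_l) : aform R {set V} :=
  aform_sum (delta adj (S i)) (- (lam * (b i)%:~R)).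

Lemma aeval_deg_form lam i x :
  aeval (Eset adj) (deg_form lam i) x = xsum x (delta adj (S i)) - lam * (b i)%:~R.
Proof. by rewrite aeval_sum (setIidPr (delta_subset _)). Qed.

Lemma aeval_cost x : aeval (Eset adj) (c, 0) x = cost adj c x.
Proof. by rewrite /aeval addr0. Qed.

Lemma feasible_b_ge0 x i : feasible adj S b 1 x -> 0 <= (b i)%:~R :> R.
Proof.
move=> [Px x_deg]; have := x_deg i; rewrite mul1r; apply: le_trans.
exact: xsum_ge0 Px (delta_subset _).
Qed.

Lemma feasible_le lam mu x : (forall i, 0 <= (b i)%:~R :> R) -> lam <= mu ->
  feasible adj S b lam x -> feasible adj S b mu x.
Proof.
move=> b_ge0 lam_le [Px x_deg]; split=> // i.
by apply: le_trans (x_deg i) _; apply: ler_wpM2r.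
Qed.

Definition lagrangian (lam : R) (y : 'I_l -> R) (x : {set V} -> R) : R :=
  cost adj c x + \sum_(i < l) (xsum x (delta adj (S i)) - lam * (b i)%:~R) * y i.

Lemma lagrangian_le_feasible lam y x : (forall i, 0 <= y i) -> feasible adj S b 1 x ->
  lagrangian lam y x <= cost adj c x - (lam - 1) * \sum_(i < l) (b i)%:~R * y i.
Proof.
move=> y_ge0 [_ x_deg]; rewrite lerD2l mulr_sumr -sumrN; apply: ler_sum => i _.
rewrite [(lam - 1) * _]mulrA -[X in _ <= X]mulNr; apply: ler_wpM2r => //.
have := x_deg i; lra.
Qed.

Lemma le_glag lam y z : (exists x, in_PST adj x) ->
  (forall x, in_PST adj x -> z <= lagrangian lam y x) -> z <= glag adj S b c lam y.
Proof.
move=> [x0 Px0] z_le; apply: lb_le_inf; first by exists (lagrangian lam y x0), x0.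
by move=> _ [x Px <-]; apply: z_le.
Qed.

Lemma le_OPT lam z : (exists x, feasible adj S b lam x) ->
  (forall x, feasible adj S b lam x -> z <= cost adj c x) -> z <= OPT adj S b c lam.
Proof.
move=> [x0 fx0] z_le; apply: lb_le_inf; first by exists (cost adj c x0), x0.
by move=> _ [x fx <-]; apply: z_le.
Qed.

Hypothesis c_ge0 : forall e, e \in Eset adj -> 0 <= c e.

Lemma cost_ge0 x : in_PST adj x -> 0 <= cost adj c x.
Proof. by move=> [x_ge0 _ _]; apply: sumr_ge0 => A EA; rewrite mulr_ge0 ?c_ge0 ?x_ge0. Qed.

Lemma OPT_le_cost lam x : feasible adj S b lam x -> OPT adj S b c lam <= cost adj c x.
Proof.
move=> fx; apply: ge_inf; last by exists x.
by exists 0 => _ [x' [Px' _] <-]; apply: cost_ge0.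
Qed.

Lemma glag_le_lagrangian lam y x : (forall i, 0 <= y i) -> in_PST adj x ->
  glag adj S b c lam y <= lagrangian lam y x.
Proof.
move=> y_ge0 Px; apply: ge_inf; last by exists x.
exists (\sum_(i < l) - (lam * (b i)%:~R) * y i) => _ [x' Px' <-].
rewrite -[X in X <= _]add0r lerD ?cost_ge0 //; apply: ler_sum => i _.
apply: ler_wpM2r => //; rewrite -[X in X <= _]add0r lerD2r.
exact: xsum_ge0 Px' (delta_subset _).
Qed.

Lemma lt_OPT_le_glag lam z x0 : feasible adj S b lam x0 -> z < OPT adj S b c lam ->
  exists2 y, forall i, 0 <= y i & z <= glag adj S b c lam y.
Proof.
move=> [Px0 x0_deg] z_lt.
have deg_le0 x : (forall i, xsum x (delta adj (S i)) <= lam * (b i)%:~R) ->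
    forall i, aeval (Eset adj) (deg_form lam i) x <= 0.
  by move=> x_deg i; rewrite aeval_deg_form subr_le0.
have z_lt_cost x : in_polyhedron (Eset adj) pst_form x ->
    (forall i, aeval (Eset adj) (deg_form lam i) x <= 0) -> z < aeval (Eset adj) (c, 0) x.
  move=> /in_PST_polyhedron Px x_deg; rewrite aeval_cost (lt_le_trans z_lt) // OPT_le_cost //.
  by split=> // i; have := x_deg i; rewrite aeval_deg_form subr_le0.
have [y y_ge0 z_lt_lag] :=
  lagrange_duality ((in_PST_polyhedron x0).1 Px0) (deg_le0 x0 x0_deg) z_lt_cost.
exists y => //; apply: le_glag; first by exists x0.
move=> x /in_PST_polyhedron /z_lt_lag; rewrite aeval_cost; under eq_bigr do rewrite aeval_deg_form.
exact: ltW.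
Qed.

Lemma OPT_le_glag_argmax lam x0 ystar : feasible adj S b lam x0 ->
  (forall y, (forall i, 0 <= y i) -> glag adj S b c lam y <= glag adj S b c lam ystar) ->
  OPT adj S b c lam <= glag adj S b c lam ystar.
Proof.
move=> fx0 ystar_max; apply/ler_addgt0Pr => e e_gt0; rewrite -lerBlDr.
have OPT_e_lt : OPT adj S b c lam - e < OPT adj S b c lam by rewrite ltrBlDr ltrDl.
have [y y_ge0 le_glag_y] := lt_OPT_le_glag fx0 OPT_e_lt.
exact: le_trans le_glag_y (ystar_max y y_ge0).
Qed.

End SpanningTreeLP.

Theorem lemma7 (R : realType) (V : finType) (adj : rel V)
  (Hsym : symmetric adj) (Hirr : irreflexive adj)
  (Hconn : forall u v : V, connect adj u v)
  (l : nat) (S : 'I_l -> {set V})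
  (Hchain : forall i j : 'I_l, (i < j)%N -> S i \proper S j)
  (Htop : forall i : 'I_l, S i \proper [set: V])
  (b : 'I_l -> int) (c : {set V} -> R)
  (Hc : forall e, e \in Eset adj -> 0 <= c e)
  (lam : R) (Hlam : 1 < lam)
  (Hfeas : exists x : {set V} -> R, feasible adj S b 1 x)
  (ystar : 'I_l -> R) (Hy0 : forall i, 0 <= ystar i)
  (Hopt : forall y : 'I_l -> R, (forall i, 0 <= y i) ->
            glag adj S b c lam y <= glag adj S b c lam ystar) :
  \sum_(i < l) (b i)%:~R * ystar i <=
    (OPT adj S b c 1 - OPT adj S b c lam) / (lam - 1).
Proof.
have [x1 fx1] := Hfeas.
have b_ge0 i : 0 <= (b i)%:~R :> R := feasible_b_ge0 i fx1.
have fx1_lam := feasible_le b_ge0 (ltW Hlam) fx1.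
have OPT_lam_le := OPT_le_glag_argmax Hc fx1_lam Hopt.
rewrite ler_pdivlMr ?subr_gt0 // lerBrDr; apply: le_OPT Hfeas _ => x fx.
have := glag_le_lagrangian S b Hc lam Hy0 fx.1; have := lagrangian_le_feasible c lam Hy0 fx.
lra.
Qed.
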